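(* Let $I$ be a nonempty open real interval and let $(f,g)\in\mathscr{B}_0(I)$. Consider the statements: (i) There exists a continuous strictly monotone function $h:I\to\mathbb{R}$ such that \[ \Big(\frac{g}{f}\Big)^{-1}\!\left(\frac{g(x)+g(y)}{f(x)+f(y)}\right)=h^{-1}\Big(\frac{h(x)+h(y)}{2}\Big)\qquad\text{for all } x,y\in I. \tag{$*$} \] (ii) There exist real constants $\alpha,\beta,\gamma$ such that $\alpha f^2+\beta fg+\gamma g^2=1$ on $I$. (iii) (Applicable when $(f,g)\in\mathscr{B}_1(I)$.) Equation $( * )$ holds with $h$ being a primitive function of $W^{1,0}_{f,g}$. (iv) (Applicable when $(f,g)\in\mathscr{B}_2(I)$.) There exists a real constant $\delta$ such that $W^{2,1}_{f,g}=\delta\,(W^{1,0}_{f,g})^3$ on $I$. (v) (Applicable when $(f,g)\in\mathscr{B}_2(I)$.) $\Psi_{f,g}$ is differentiable and $\Psi'_{f,g}=2\Phi_{f,g}\Psi_{f,g}$ on $I$. Then (i) and (ii) are equivalent; if in addition $(f,g)\in\mathscr{B}_1(I)$, then (i), (ii), (iii) are equivalent; and if in addition $(f,g)\in\mathscr{B}_2(I)$, then (i)–(v) are all equivalent.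
   Context: $\mathscr{B}_0(I)$ is the class of pairs $(f,g)$ of functions $I\to\mathbb{R}$ such that $f$ is everywhere positive on $I$ and $g/f$ is strictly monotone and continuous on $I$. For $n\geq1$, $\mathscr{B}_n(I)$ is the class of pairs $(f,g)$ such that $f$ is everywhere positive on $I$, $f,g$ are $n$ times continuously differentiable on $I$, and $(g/f)'$ is nowhere zero on $I$. For such pairs and $i,j\in\{0,\dots,n\}$, $W^{i,j}_{f,g}:=f^{(i)}g^{(j)}-f^{(j)}g^{(i)}$ (the determinant with first row $f^{(i)},f^{(j)}$ and second row $g^{(i)},g^{(j)}$), and $\Phi_{f,g}:=W^{2,0}_{f,g}/W^{1,0}_{f,g}$, $\Psi_{f,g}:=-W^{2,1}_{f,g}/W^{1,0}_{f,g}$. *)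

From Stdlib Require Import Reals ClassicalEpsilon.
From Coquelicot Require Import Coquelicot.
Open Scope R_scope.

Definition oint (a b : Rbar) (x : R) : Prop :=
  Rbar_lt a x /\ Rbar_lt x b.

Definition strictly_increasing_on (I : R -> Prop) (p : R -> R) : Prop :=
  forall x y, I x -> I y -> x < y -> p x < p y.
Definition strictly_decreasing_on (I : R -> Prop) (p : R -> R) : Prop :=
  forall x y, I x -> I y -> x < y -> p y < p x.
Definition strictly_monotone_on (I : R -> Prop) (p : R -> R) : Prop :=
  strictly_increasing_on I p \/ strictly_decreasing_on I p.
Definition continuous_on_set (I : R -> Prop) (p : R -> R) : Prop :=
  forall x, I x -> continuous p x.

(* The inverse of p (restricted to I), evaluated at c: the (unique, when p is
   injective on I and c is in p(I)) point z of I with p z = c. *)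
Definition inv_on (I : R -> Prop) (p : R -> R) (c : R) : R :=
  epsilon (inhabits 0) (fun z => I z /\ p z = c).

Definition Cn_on (n : nat) (I : R -> Prop) (p : R -> R) : Prop :=
  (forall k, (k < n)%nat -> forall x, I x -> ex_derive (Derive_n p k) x) /\
  (forall k, (k <= n)%nat -> forall x, I x -> continuous (Derive_n p k) x).

Definition quot (f g : R -> R) : R -> R := fun t => g t / f t.

Definition B0 (I : R -> Prop) (f g : R -> R) : Prop :=
  (forall x, I x -> 0 < f x) /\
  strictly_monotone_on I (quot f g) /\ continuous_on_set I (quot f g).

Definition Bn (n : nat) (I : R -> Prop) (f g : R -> R) : Prop :=
  (forall x, I x -> 0 < f x) /\ Cn_on n I f /\ Cn_on n I g /\
  (forall x, I x -> Derive (quot f g) x <> 0).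

Definition W (i j : nat) (f g : R -> R) : R -> R :=
  fun t => Derive_n f i t * Derive_n g j t - Derive_n f j t * Derive_n g i t.

Definition Phi (f g : R -> R) : R -> R := fun t => W 2 0 f g t / W 1 0 f g t.
Definition Psi (f g : R -> R) : R -> R := fun t => - W 2 1 f g t / W 1 0 f g t.

Definition star_eq (I : R -> Prop) (f g h : R -> R) : Prop :=
  forall x y, I x -> I y ->
    inv_on I (quot f g) ((g x + g y) / (f x + f y)) =
    inv_on I h ((h x + h y) / 2).

Definition stmt_i (I : R -> Prop) (f g : R -> R) : Prop :=
  exists h : R -> R, continuous_on_set I h /\ strictly_monotone_on I h /\
    star_eq I f g h.

Definition stmt_ii (I : R -> Prop) (f g : R -> R) : Prop :=
  exists alpha beta gamma : R, forall x, I x ->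
    alpha * f x ^ 2 + beta * f x * g x + gamma * g x ^ 2 = 1.

Definition stmt_iii (I : R -> Prop) (f g : R -> R) : Prop :=
  exists h : R -> R, (forall x, I x -> is_derive h x (W 1 0 f g x)) /\
    star_eq I f g h.

Definition stmt_iv (I : R -> Prop) (f g : R -> R) : Prop :=
  exists delta : R, forall x, I x -> W 2 1 f g x = delta * (W 1 0 f g x) ^ 3.

Definition stmt_v (I : R -> Prop) (f g : R -> R) : Prop :=
  forall x, I x -> is_derive (Psi f g) x (2 * Phi f g x * Psi f g x).

(* Put P t = al + be t + ga t^2 and q = g/f.

   (ii) => (i), (iii): the relation reads f = 1 / sqrt (P o q), so the left-hand mean of (star) is
   the average of u = q x and v = q y with weights 1 / sqrt (P u) and 1 / sqrt (P v).  For a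
   primitive k of 1 / P this average is mapped by k to (k u + k v) / 2: as a function of v the
   defect has derivative 0.  So h = k o q solves (star), and so does - h, whose derivative is
   W^{1,0}.

   (i) => (ii): transported by h, F = f o h^-1 and G = g o h^-1 satisfy
   F c (G (c - d) + G (c + d)) = G c (F (c - d) + F (c + d)).  Since G / F is injective, the ratio
   L d = (F (c - d) + F (c + d)) / F c does not depend on c; integrating
   Z (t - d) + Z (t + d) = L d Z t over d shows that F and G are C^2 with Z'' = mu Z for a single
   constant mu.  Their Wronskian is then a nonzero constant, and the first integrals
   (l F' + m G')^2 / w^2 + de (l F + m G)^2 of this linear equation yield the quadratic relation.

   Wronskian conditions: differentiating the relation twice gives
   W^{2,1} = (al ga - be^2 / 4) (W^{1,0})^3; conversely the same first integrals work for f, g.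
   Finally (iv) says Psi = - de (W^{1,0})^2, and (v) says that Psi / (W^{1,0})^2 is constant. *)

From Stdlib Require Import Reals Lra Lia ClassicalEpsilon.
From Coquelicot Require Import Coquelicot.
Open Scope R_scope.

(** * Intervals and strictly monotone continuous functions *)

Definition is_interval (S : R -> Prop) : Prop :=
  forall x y z, S x -> S y -> x <= z <= y -> S z.

Definition injective_on (S : R -> Prop) (p : R -> R) : Prop :=
  forall x y, S x -> S y -> p x = p y -> x = y.

Lemma is_interval_between S x y z :
  is_interval S -> S x -> S y -> Rmin x y <= z <= Rmax x y -> S z.
Proof.
  intros HS Hx Hy. unfold Rmin, Rmax. destruct (Rle_dec x y); intro Hz.
  - exact (HS x y z Hx Hy Hz).
  - exact (HS y x z Hy Hx Hz).
Qed.

Lemma is_interval_center S c d : is_interval S -> S (c - d) -> S (c + d) -> S c.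
Proof.
  intros HS H1 H2. apply (is_interval_between S _ _ c HS H1 H2).
  unfold Rmin, Rmax. destruct (Rle_dec (c - d) (c + d)); lra.
Qed.

Lemma is_interval_oint a b : is_interval (oint a b).
Proof.
  intros x y z [H1 H2] [H3 H4] [H5 H6]. split.
  - destruct a; simpl in *; auto; lra.
  - destruct b; simpl in *; auto; lra.
Qed.

Lemma open_oint a b : open (oint a b).
Proof. apply open_and; [apply open_Rbar_gt | apply open_Rbar_lt]. Qed.

Lemma oint_inhabited a b : Rbar_lt a b -> exists x, oint a b x.
Proof.
  unfold oint. destruct a as [a| |], b as [b| |]; simpl; try contradiction; intro H.
  - exists ((a + b) / 2). lra.
  - exists (a + 1). lra.
  - exists (b - 1). lra.
  - exists 0. auto.
Qed.

Lemma is_interval_ball s r : is_interval (fun y => Rabs (y - s) < r).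
Proof. intros x y z Hx Hy Hz. apply Rabs_def2 in Hx, Hy. apply Rabs_def1; lra. Qed.

Lemma open_ball_R s r : open (fun y => Rabs (y - s) < r).
Proof.
  intros x Hx. exists (mkposreal _ (proj2 (Rlt_0_minus _ _) Hx)). intros y Hy.
  change (Rabs (y - x) < r - Rabs (x - s)) in Hy.
  replace (y - s) with ((y - x) + (x - s)) by ring.
  eapply Rle_lt_trans; [apply Rabs_triang | lra].
Qed.

Lemma Rabs_shift_le s t e : Rabs (t + e - s) <= Rabs (t - s) + Rabs e.
Proof. replace (t + e - s) with ((t - s) + e) by ring. apply Rabs_triang. Qed.

Lemma Rabs_center_pm s d : Rabs (s - d - s) = Rabs d /\ Rabs (s + d - s) = Rabs d.
Proof.
  replace (s - d - s) with (- d) by ring. replace (s + d - s) with d by ring.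
  rewrite Rabs_Ropp. split; reflexivity.
Qed.

Lemma open_Rabs (S : R -> Prop) x :
  open S -> S x -> exists e, 0 < e /\ forall y, Rabs (y - x) < e -> S y.
Proof.
  intros HS Hx. destruct (HS x Hx) as [e He]. exists e. split; [apply cond_pos | exact He].
Qed.

Lemma open_other_point (S : R -> Prop) x : open S -> S x -> exists y, S y /\ y <> x.
Proof.
  intros HS Hx. destruct (open_Rabs S x HS Hx) as [e [He H]]. exists (x + e / 2). split.
  - apply H. replace (x + e / 2 - x) with (e / 2) by ring. rewrite Rabs_pos_eq; lra.
  - lra.
Qed.

Lemma continuous_pos_near (p : R -> R) x :
  continuous p x -> 0 < p x -> exists e, 0 < e /\ forall y, Rabs (y - x) < e -> 0 < p y.
Proof.
  intros Hc Hp. destruct (Hc _ (locally_ball (p x) (mkposreal _ Hp))) as [e He].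
  exists e. split; [apply cond_pos |]. intros y Hy.
  specialize (He y Hy). change (Rabs (p y - p x) < p x) in He. apply Rabs_def2 in He. lra.
Qed.

Lemma is_derive_continuous (p : R -> R) (x l : R) : is_derive p x l -> continuous p x.
Proof.
  intro H. apply (ex_derive_continuous (K := R_AbsRing) (V := R_NormedModule)). exists l. exact H.
Qed.

(* [auto_derive] leaves [Derive (fun y => F y) x] for an abstract [F]. *)
Ltac rewrite_derive H :=
  lazymatch type of H with
  | is_derive ?F ?x ?l =>
      replace (Derive (fun y => F y) x) with l by (symmetry; apply is_derive_unique; exact H)
  end.

Lemma is_derive_value (p : R -> R) x l l' : is_derive p x l -> l = l' -> is_derive p x l'.
Proof. intros H <-. exact H. Qed.

Lemma continuous_mult_R (p r : R -> R) x :
  continuous p x -> continuous r x -> continuous (fun t => p t * r t) x.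
Proof. exact (@continuous_mult R_UniformSpace R_AbsRing p r x). Qed.

Lemma continuous_plus_R (p r : R -> R) x :
  continuous p x -> continuous r x -> continuous (fun t => p t + r t) x.
Proof. exact (@continuous_plus R_UniformSpace R_AbsRing R_NormedModule p r x). Qed.

Lemma continuous_minus_R (p r : R -> R) x :
  continuous p x -> continuous r x -> continuous (fun t => p t - r t) x.
Proof. exact (@continuous_minus R_UniformSpace R_AbsRing R_NormedModule p r x). Qed.

Lemma is_derive_locally_const (S : R -> Prop) (p : R -> R) c x :
  open S -> S x -> (forall t, S t -> p t = c) -> is_derive p x 0.
Proof.
  intros HS Hx Hp. apply (is_derive_ext_loc (fun _ => c)).
  - apply (filter_imp S); [intros t Ht; symmetry; auto | exact (HS x Hx)].
  - exact (is_derive_const (V := R_NormedModule) c x).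
Qed.

Lemma ivt_segment (p : R -> R) x y c :
  x <= y -> (forall t, x <= t <= y -> continuous p t) ->
  Rmin (p x) (p y) <= c <= Rmax (p x) (p y) -> exists z, x <= z <= y /\ p z = c.
Proof.
  intros Hxy Hp Hc.
  destruct (Req_dec (p x) c) as [E|E]; [exists x; split; [lra | exact E] |].
  destruct (Req_dec (p y) c) as [E'|E']; [exists y; split; [lra | exact E'] |].
  assert (Lxy : x < y).
  { destruct (Req_dec x y) as [->|]; [|lra].
    unfold Rmin, Rmax in Hc. destruct (Rle_dec (p y) (p y)); lra. }
  assert (Hct : forall t, x <= t <= y -> continuity_pt p t)
    by (intros t Ht; apply continuity_pt_filterlim, Hp, Ht).
  assert (Hcc : forall t, x <= t <= y -> continuity_pt (fun _ => c) t)
    by (intros; apply continuity_pt_const; intros ? ?; reflexivity).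
  unfold Rmin, Rmax in Hc. destruct (Rle_dec (p x) (p y)).
  - destruct (Ranalysis5.IVT_interv (fun t => p t - c) x y) as [z [Hz Ez]]; try lra.
    + intros t Ht. apply continuity_pt_minus; auto.
    + exists z. split; [exact Hz | lra].
  - destruct (Ranalysis5.IVT_interv (fun t => c - p t) x y) as [z [Hz Ez]]; try lra.
    + intros t Ht. apply continuity_pt_minus; auto.
    + exists z. split; [exact Hz | lra].
Qed.

Lemma interval_ivt S (p : R -> R) x y c :
  is_interval S -> continuous_on_set S p -> S x -> S y ->
  Rmin (p x) (p y) <= c <= Rmax (p x) (p y) -> exists z, S z /\ p z = c.
Proof.
  intros HS Hp Hx Hy Hc.
  destruct (Rle_dec x y) as [Lxy|Lxy].
  - destruct (ivt_segment p x y c Lxy) as [z [Hz Ez]]; auto.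
    + intros t Ht. exact (Hp t (HS x y t Hx Hy Ht)).
    + exists z. split; [exact (HS x y z Hx Hy Hz) | exact Ez].
  - destruct (ivt_segment p y x c) as [z [Hz Ez]]; try lra.
    + intros t Ht. exact (Hp t (HS y x t Hy Hx Ht)).
    + rewrite Rmin_comm, Rmax_comm. exact Hc.
    + exists z. split; [exact (HS y x z Hy Hx Hz) | exact Ez].
Qed.

Definition image (S : R -> Prop) (p : R -> R) (s : R) : Prop := exists x, S x /\ p x = s.

Lemma image_of S p x : S x -> image S p (p x).
Proof. intro Hx. exists x. auto. Qed.

Lemma image_is_interval S p : is_interval S -> continuous_on_set S p -> is_interval (image S p).
Proof.
  intros HS Hp u v w [x [Hx <-]] [y [Hy <-]] Hw.
  apply (interval_ivt S p x y w HS Hp Hx Hy).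
  split; [apply (Rle_trans _ (p x)); [apply Rmin_l | lra]
         | apply (Rle_trans _ (p y)); [lra | apply Rmax_r]].
Qed.

Lemma segment_mean_value S (p d : R -> R) x y :
  is_interval S -> (forall t, S t -> is_derive p t (d t)) -> S x -> S y ->
  exists c, S c /\ p y - p x = d c * (y - x).
Proof.
  intros HS Hd Hx Hy.
  assert (Hin : forall t, Rmin x y <= t <= Rmax x y -> S t)
    by (intros t Ht; exact (is_interval_between S x y t HS Hx Hy Ht)).
  destruct (MVT_gen p x y d) as [c [Hc Ec]].
  - intros t Ht. apply Hd, Hin. lra.
  - intros t Ht. apply continuity_pt_filterlim, (is_derive_continuous p t (d t)), Hd, Hin, Ht.
  - exists c. split; [apply Hin, Hc | exact Ec].
Qed.

Lemma interval_derive0_const S (p : R -> R) x y :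
  is_interval S -> (forall t, S t -> is_derive p t 0) -> S x -> S y -> p x = p y.
Proof.
  intros HS Hd Hx Hy.
  destruct (segment_mean_value S p (fun _ => 0) x y HS Hd Hx Hy) as [c [_ Ec]]. lra.
Qed.

Lemma interval_derive_pos_increasing S (p d : R -> R) :
  is_interval S -> (forall t, S t -> is_derive p t (d t)) -> (forall t, S t -> 0 < d t) ->
  strictly_increasing_on S p.
Proof.
  intros HS Hd Hpos x y Hx Hy Lxy.
  destruct (segment_mean_value S p d x y HS Hd Hx Hy) as [c [Hc Ec]].
  pose proof (Rmult_lt_0_compat _ _ (Hpos c Hc) (proj2 (Rlt_0_minus x y) Lxy)). lra.
Qed.

Lemma strictly_monotone_injective S p : strictly_monotone_on S p -> injective_on S p.
Proof.
  intros [H|H] x y Hx Hy E; destruct (Rtotal_order x y) as [L|[L|L]]; auto;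
  [ specialize (H x y Hx Hy L) | specialize (H y x Hy Hx L)
  | specialize (H x y Hx Hy L) | specialize (H y x Hy Hx L)]; lra.
Qed.

Lemma inv_on_correct S p c : image S p c -> S (inv_on S p c) /\ p (inv_on S p c) = c.
Proof. exact (epsilon_spec (inhabits 0) (fun z => S z /\ p z = c)). Qed.

Lemma inv_on_cancel S p z : injective_on S p -> S z -> inv_on S p (p z) = z.
Proof.
  intros Hi Hz. destruct (inv_on_correct S p (p z)) as [H1 H2]; [exists z; auto |].
  exact (Hi _ _ H1 Hz H2).
Qed.

Lemma weighted_mean_between A B u v : 0 < A -> 0 < B ->
  Rmin u v <= (A * u + B * v) / (A + B) <= Rmax u v.
Proof.
  intros HA HB.
  assert (E1 : (A * u + B * v) / (A + B) - u = B / (A + B) * (v - u)) by (field; lra).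
  assert (E2 : v - (A * u + B * v) / (A + B) = A / (A + B) * (v - u)) by (field; lra).
  assert (PA : 0 < A / (A + B)) by (apply Rdiv_lt_0_compat; lra).
  assert (PB : 0 < B / (A + B)) by (apply Rdiv_lt_0_compat; lra).
  unfold Rmin, Rmax. destruct (Rle_dec u v); split; nra.
Qed.

Lemma strictly_monotone_between S p x1 x2 y :
  strictly_monotone_on S p -> S x1 -> S x2 -> S y -> x1 < x2 ->
  Rmin (p x1) (p x2) < p y < Rmax (p x1) (p x2) -> x1 < y < x2.
Proof.
  intros Hm H1 H2 Hy L12 Hb.
  destruct Hm as [Hm|Hm]; pose proof (Hm x1 x2 H1 H2 L12);
    unfold Rmin, Rmax in Hb; destruct (Rle_dec (p x1) (p x2)); try lra;
    split; apply Rnot_le_lt; intro L; destruct (Rle_lt_or_eq_dec _ _ L) as [L'|E];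
    try (subst; lra); first [pose proof (Hm _ _ Hy H1 L') | pose proof (Hm _ _ H2 Hy L')]; lra.
Qed.

Lemma near_inside a b s :
  a < s < b -> exists d, 0 < d /\ forall t, Rabs (t - s) < d -> a < t < b.
Proof.
  intros H. exists (Rmin (s - a) (b - s)). split; [apply Rmin_glb_lt; lra |].
  intros t Ht. apply Rabs_def2 in Ht.
  pose proof (Rmin_l (s - a) (b - s)). pose proof (Rmin_r (s - a) (b - s)). lra.
Qed.

Lemma open_sides (S : R -> Prop) x eps :
  open S -> S x -> 0 < eps -> exists e, 0 < e < eps /\ S (x - e) /\ S (x + e).
Proof.
  intros Ho Hx Heps. destruct (open_Rabs S x Ho Hx) as [r [Hr Hb]].
  pose proof (Rmin_l eps r). pose proof (Rmin_r eps r).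
  assert (0 < Rmin eps r) by (apply Rmin_glb_lt; lra).
  exists (Rmin eps r / 2). split; [lra | split; apply Hb].
  - replace (x - Rmin eps r / 2 - x) with (- (Rmin eps r / 2)) by ring.
    rewrite Rabs_Ropp, Rabs_pos_eq; lra.
  - replace (x + Rmin eps r / 2 - x) with (Rmin eps r / 2) by ring.
    rewrite Rabs_pos_eq; lra.
Qed.

Section StrictlyMonotoneContinuous.

Variables (S : R -> Prop) (p : R -> R).
Hypotheses (HS : is_interval S) (Hc : continuous_on_set S p) (Hm : strictly_monotone_on S p).

Lemma strictly_monotone_bracket x e :
  0 < e -> S (x - e) -> S x -> S (x + e) ->
  Rmin (p (x - e)) (p (x + e)) < p x < Rmax (p (x - e)) (p (x + e)).
Proof.
  intros He H1 H H2. unfold Rmin, Rmax.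
  destruct Hm as [Hm'|Hm']; pose proof (Hm' _ _ H1 H ltac:(lra));
    pose proof (Hm' _ _ H H2 ltac:(lra)); destruct (Rle_dec (p (x - e)) (p (x + e))); lra.
Qed.

Lemma image_bracket x e t :
  0 < e -> S (x - e) -> S (x + e) ->
  Rmin (p (x - e)) (p (x + e)) < t < Rmax (p (x - e)) (p (x + e)) ->
  image S p t /\ x - e < inv_on S p t < x + e.
Proof.
  intros He H1 H2 Ht.
  assert (It : image S p t).
  { apply (is_interval_between _ (p (x - e)) (p (x + e)) t (image_is_interval S p HS Hc));
      [exists (x - e) | exists (x + e) | lra]; auto. }
  destruct (inv_on_correct S p t It) as [Hy Ey].
  split; [exact It |]. apply (strictly_monotone_between S p); auto; [lra | rewrite Ey; exact Ht].
Qed.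

Lemma image_open : open S -> open (image S p).
Proof.
  intros Ho s [x [Hx <-]].
  destruct (open_sides S x 1 Ho Hx Rlt_0_1) as [e [He [H1 H2]]].
  destruct (near_inside _ _ _ (strictly_monotone_bracket x e (proj1 He) H1 Hx H2))
    as [d [Hd Hnear]].
  exists (mkposreal d Hd). intros t Ht.
  exact (proj1 (image_bracket x e t (proj1 He) H1 H2 (Hnear t Ht))).
Qed.

Lemma inv_on_continuous s : open S -> image S p s -> continuous (inv_on S p) s.
Proof.
  intros Ho Is. destruct (inv_on_correct S p s Is) as [Hx Ex].
  apply filterlim_locally. intros eps.
  destruct (open_sides S _ eps Ho Hx (cond_pos eps)) as [e [He [H1 H2]]].
  pose proof (strictly_monotone_bracket _ e (proj1 He) H1 Hx H2) as Hb. rewrite Ex in Hb.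
  destruct (near_inside _ _ _ Hb) as [d [Hd Hnear]].
  exists (mkposreal d Hd). intros t Ht.
  destruct (image_bracket _ e t (proj1 He) H1 H2 (Hnear t Ht)) as [_ Hi].
  change (Rabs (inv_on S p t - inv_on S p s) < eps). apply Rabs_def1; lra.
Qed.

End StrictlyMonotoneContinuous.

Lemma interval_ex_RInt S (p : R -> R) a b :
  is_interval S -> continuous_on_set S p -> S a -> S b -> ex_RInt p a b.
Proof.
  intros HS Hc Ha Hb. apply (ex_RInt_continuous (V := R_CompleteNormedModule)).
  intros z Hz. exact (Hc z (is_interval_between S a b z HS Ha Hb Hz)).
Qed.

Lemma interval_primitive (S : R -> Prop) (p : R -> R) u0 u :
  is_interval S -> open S -> continuous_on_set S p -> S u0 -> S u ->
  is_derive (fun v => RInt p u0 v) u (p u).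
Proof.
  intros HS Ho Hc H0 Hu. apply (is_derive_RInt p _ u0 u); [| exact (Hc u Hu)].
  apply (filter_imp S); [| exact (Ho u Hu)].
  intros v Hv. apply (RInt_correct (V := R_CompleteNormedModule)).
  exact (interval_ex_RInt S p u0 v HS Hc H0 Hv).
Qed.

Lemma W10_eq f g t : W 1 0 f g t = Derive f t * g t - f t * Derive g t.
Proof. reflexivity. Qed.

Lemma W20_eq f g t : W 2 0 f g t = Derive (Derive f) t * g t - f t * Derive (Derive g) t.
Proof. reflexivity. Qed.

Lemma W21_eq f g t :
  W 2 1 f g t = Derive (Derive f) t * Derive g t - Derive f t * Derive (Derive g) t.
Proof. reflexivity. Qed.

Lemma Bn2_Bn1 S f g : Bn 2 S f g -> Bn 1 S f g.
Proof.
  intros [Hf [[Fd Fc] [[Gd Gc] Hq]]].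
  repeat split; auto; intros k Hk; first [apply Fd | apply Fc | apply Gd | apply Gc]; lia.
Qed.

Section FirstOrder.

Variables (S : R -> Prop) (f g : R -> R).
Hypothesis HB : Bn 1 S f g.

Lemma is_derive_quot x : S x -> is_derive (quot f g) x (- W 1 0 f g x / f x ^ 2).
Proof.
  destruct HB as [Hf [[Fd _] [[Gd _] _]]]. intro Hx.
  pose proof (Hf x Hx).
  replace (- W 1 0 f g x / f x ^ 2) with ((Derive g x * f x - g x * Derive f x) / f x ^ 2)
    by (rewrite W10_eq; field; lra).
  apply is_derive_div; [apply Derive_correct, (Gd 0%nat) | apply Derive_correct, (Fd 0%nat) | lra];
    auto.
Qed.

Lemma W10_neq0 x : S x -> W 1 0 f g x <> 0.
Proof.
  intros Hx E. destruct HB as [Hf [_ [_ Hq]]]. apply (Hq x Hx).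
  rewrite (is_derive_unique _ _ _ (is_derive_quot x Hx)), E. unfold Rdiv. ring.
Qed.

Lemma W10_continuous x : S x -> continuous (W 1 0 f g) x.
Proof.
  destruct HB as [_ [[_ Fc] [[_ Gc] _]]]. intro Hx.
  apply continuous_minus_R; apply continuous_mult_R;
    [apply (Fc 1%nat) | apply (Gc 0%nat) | apply (Fc 0%nat) | apply (Gc 1%nat)]; auto.
Qed.

Lemma W10_constant_sign :
  is_interval S -> (forall x, S x -> 0 < W 1 0 f g x) \/ (forall x, S x -> W 1 0 f g x < 0).
Proof.
  intro HS.
  destruct (classic (exists x, S x /\ 0 < W 1 0 f g x)) as [[x [Hx Px]]|Hneg].
  - left. intros y Hy. destruct (Rlt_or_le 0 (W 1 0 f g y)) as [|Ny]; [assumption | exfalso].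
    destruct (interval_ivt S (W 1 0 f g) x y 0 HS W10_continuous Hx Hy) as [z [Hz Ez]].
    + unfold Rmin, Rmax. destruct (Rle_dec (W 1 0 f g x) (W 1 0 f g y)); lra.
    + exact (W10_neq0 z Hz Ez).
  - right. intros y Hy. pose proof (W10_neq0 y Hy).
    destruct (Rlt_or_le 0 (W 1 0 f g y)); [exfalso; eauto | lra].
Qed.

End FirstOrder.

Lemma stmt_iii_stmt_i S f g : is_interval S -> Bn 1 S f g -> stmt_iii S f g -> stmt_i S f g.
Proof.
  intros HS HB [h [Hh Hst]]. exists h. split; [| split; [| exact Hst]].
  - intros x Hx. exact (is_derive_continuous _ _ _ (Hh x Hx)).
  - destruct (W10_constant_sign S f g HB HS) as [P|N]; [left | right].
    + exact (interval_derive_pos_increasing S h _ HS Hh P).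
    + intros x y Hx Hy Lxy. assert (- h x < - h y); [| lra].
      apply (interval_derive_pos_increasing S (fun t => - h t) (fun t => - W 1 0 f g t)); auto.
      * intros t Ht. exact (is_derive_opp (K := R_AbsRing) (V := R_NormedModule) _ _ _ (Hh t Ht)).
      * intros t Ht. specialize (N t Ht). lra.
Qed.

(** * The quadratic relation implies (i) and (iii) *)

Definition quad (al be ga t : R) : R := al + be * t + ga * t ^ 2.

(* With [B = b t] and [B' = b' t] for [b = / sqrt quad], this says that [k m] has derivative
   [k' t / 2] in [t] when [k' = / quad]. *)
Lemma quad_mean_slope al be ga A B B' u t :
  0 < A -> 0 < B -> A ^ 2 * quad al be ga u = 1 -> B ^ 2 * quad al be ga t = 1 ->
  B' = - (be + 2 * ga * t) * B ^ 3 / 2 ->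
  0 < quad al be ga ((A * u + B * t) / (A + B)) ->
  / quad al be ga t =
  2 * (((B' * t + B) * (A + B) - (A * u + B * t) * B') / (A + B) ^ 2)
    / quad al be ga ((A * u + B * t) / (A + B)).
Proof.
  intros HA HB HPu HPt -> HPm.
  set (m := (A * u + B * t) / (A + B)) in *.
  set (c := al + be * (u + t) / 2 + ga * u * t).
  (* [c] is the polar form of [quad al be ga] at [(u, t)]. *)
  assert (Pol : quad al be ga m * (A + B) ^ 2
                = A ^ 2 * quad al be ga u + B ^ 2 * quad al be ga t + 2 * A * B * c)
    by (unfold quad, m, c; field; lra).
  assert (Em : quad al be ga m = (2 + 2 * A * B * c) / (A + B) ^ 2).
  { apply (Rmult_eq_reg_r ((A + B) ^ 2)); [| apply pow_nonzero; lra].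
    rewrite Pol, HPu, HPt. field. lra. }
  assert (Et : quad al be ga t = / B ^ 2).
  { apply (Rmult_eq_reg_l (B ^ 2)); [rewrite HPt; field; lra | apply pow_nonzero; lra]. }
  assert (Hc : 2 + 2 * A * B * c <> 0).
  { intro Z. rewrite Z in Em. unfold Rdiv in Em. rewrite Rmult_0_l in Em. lra. }
  assert (En : (- (be + 2 * ga * t) * B ^ 3 / 2 * t + B) * (A + B)
               - (A * u + B * t) * (- (be + 2 * ga * t) * B ^ 3 / 2)
             = B ^ 2 + A * B ^ 3 * c + A * B * (1 - B ^ 2 * quad al be ga t)).
  { unfold m, c, quad. field. }
  rewrite En, HPt, Em, Et. field. repeat split; lra.
Qed.

Section QuadraticPrimitive.

Variables (al be ga : R) (J : R -> Prop) (k : R -> R).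
Hypotheses (HJ : is_interval J) (HP : forall t, J t -> 0 < quad al be ga t)
  (Hk : forall t, J t -> is_derive k t (/ quad al be ga t)).

Let b (t : R) : R := / sqrt (quad al be ga t).

Lemma inv_sqrt_quad_spec t : J t ->
  0 < b t /\ b t ^ 2 * quad al be ga t = 1 /\
  is_derive b t (- (be + 2 * ga * t) * b t ^ 3 / 2).
Proof.
  intro Jt. pose proof (HP t Jt) as Pt.
  assert (Hs : 0 < sqrt (quad al be ga t)) by (apply sqrt_lt_R0; exact Pt).
  unfold b. split; [|split].
  - apply Rinv_0_lt_compat, Hs.
  - rewrite pow_inv. rewrite <- Rsqr_pow2, Rsqr_sqrt by lra. field. lra.
  - unfold quad in *. auto_derive.
    + replace (al + be * t + ga * (t * (t * 1))) with (al + be * t + ga * t ^ 2) by ring.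
      repeat split; lra.
    + replace (al + be * t + ga * (t * (t * 1))) with (al + be * t + ga * t ^ 2) by ring.
      field. lra.
Qed.

Lemma quad_primitive_mean u v : J u -> J v ->
  k ((b u * u + b v * v) / (b u + b v)) = (k u + k v) / 2.
Proof.
  intros Ju Jv.
  destruct (inv_sqrt_quad_spec u Ju) as [Bu [BPu _]].
  set (phi := fun t => k ((b u * u + b t * t) / (b u + b t)) - (k u + k t) / 2).
  assert (Hphi : forall t, J t -> is_derive phi t 0).
  { intros t Jt. destruct (inv_sqrt_quad_spec t Jt) as [Bt [BPt DBt]].
    set (m := (b u * u + b t * t) / (b u + b t)).
    assert (Jm : J m)
      by exact (is_interval_between J u t m HJ Ju Jt (weighted_mean_between _ _ u t Bu Bt)).
    pose proof (quad_mean_slope al be ga (b u) (b t) _ u t Bu Bt BPu BPt eq_refl (HP m Jm)) as Hs.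
    unfold phi. auto_derive.
    - repeat split; try lra; eexists; [apply (Hk m Jm) | exact DBt | exact DBt | apply (Hk t Jt)].
    - change ((b u * u + b t * t) * / (b u + b t)) with m.
      rewrite_derive DBt. rewrite_derive (Hk t Jt). rewrite_derive (Hk m Jm).
      pose proof (HP m Jm). pose proof (HP t Jt).
      fold m in Hs. rewrite Hs. field. repeat split; lra. }
  pose proof (interval_derive0_const J phi u v HJ Hphi Ju Jv) as E.
  unfold phi in E. replace ((b u * u + b u * u) / (b u + b u)) with u in E by (field; lra). lra.
Qed.

End QuadraticPrimitive.

Lemma star_eq_intro S f g h :
  injective_on S (quot f g) -> injective_on S h ->
  (forall x y, S x -> S y -> exists z, S z /\
     quot f g z = (g x + g y) / (f x + f y) /\ h z = (h x + h y) / 2) ->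
  star_eq S f g h.
Proof.
  intros Hq Hh H x y Hx Hy. destruct (H x y Hx Hy) as [z [Hz [<- <-]]].
  rewrite !inv_on_cancel; auto.
Qed.

Lemma quot_mean S f g x y : (forall t, S t -> 0 < f t) -> S x -> S y ->
  (g x + g y) / (f x + f y) = (f x * quot f g x + f y * quot f g y) / (f x + f y).
Proof. intros Hf Hx Hy. pose proof (Hf x Hx). pose proof (Hf y Hy). unfold quot. field. lra. Qed.

Lemma quot_mean_image S f g x y :
  is_interval S -> (forall t, S t -> 0 < f t) -> continuous_on_set S (quot f g) -> S x -> S y ->
  image S (quot f g) ((g x + g y) / (f x + f y)).
Proof.
  intros HS Hf Hc Hx Hy. rewrite (quot_mean S f g x y Hf Hx Hy).
  apply (is_interval_between _ (quot f g x) (quot f g y) _ (image_is_interval S _ HS Hc));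
    [exists x | exists y | apply weighted_mean_between]; auto.
Qed.

Section QuadraticRelation.

Variables (S : R -> Prop) (f g : R -> R) (al be ga x0 : R).
Hypotheses (HS : is_interval S) (Ho : open S) (Hx0 : S x0) (HB : B0 S f g)
  (Hii : forall x, S x -> al * f x ^ 2 + be * f x * g x + ga * g x ^ 2 = 1).

Let q := quot f g.
Let J := image S q.
Let k (u : R) : R := RInt (fun t => / quad al be ga t) (q x0) u.

Lemma quad_quot x : S x -> f x ^ 2 * quad al be ga (q x) = 1.
Proof.
  intro Hx. destruct HB as [Hf _]. pose proof (Hf x Hx).
  rewrite <- (Hii x Hx). unfold quad, q, quot. field. lra.
Qed.

Lemma quad_pos_image u : J u -> 0 < quad al be ga u.
Proof.
  intros [x [Hx <-]]. destruct HB as [Hf _]. pose proof (quad_quot x Hx).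
  destruct (Rlt_or_le 0 (quad al be ga (q x))) as [|L]; [assumption |].
  pose proof (Rmult_le_0_l (f x ^ 2) _ (pow2_ge_0 (f x)) L). lra.
Qed.

Lemma f_inv_sqrt_quad x : S x -> f x = / sqrt (quad al be ga (q x)).
Proof.
  intro Hx. destruct HB as [Hf _]. pose proof (Hf x Hx).
  assert (E : quad al be ga (q x) = (/ f x) ^ 2).
  { apply (Rmult_eq_reg_l (f x ^ 2)); [| apply pow_nonzero; lra].
    rewrite (quad_quot x Hx). field. lra. }
  rewrite E, sqrt_pow2 by (left; apply Rinv_0_lt_compat; lra). field. lra.
Qed.

Lemma inv_quad_primitive_derive u : J u -> is_derive k u (/ quad al be ga u).
Proof.
  destruct HB as [_ [Hm Hc]]. intro Ju.
  apply (interval_primitive J (fun t => / quad al be ga t)); auto.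
  - exact (image_is_interval S q HS Hc).
  - exact (image_open S q HS Hc Hm Ho).
  - intros t Jt. apply (is_derive_continuous _ _ (- (be + 2 * ga * t) / quad al be ga t ^ 2)).
    pose proof (quad_pos_image t Jt). unfold quad in *. auto_derive; [lra | field; lra].
  - exists x0. auto.
Qed.

Lemma inv_quad_primitive_increasing : strictly_increasing_on J k.
Proof.
  apply (interval_derive_pos_increasing J k (fun t => / quad al be ga t)).
  - exact (image_is_interval S q HS (proj2 (proj2 HB))).
  - exact inv_quad_primitive_derive.
  - intros t Jt. apply Rinv_0_lt_compat, quad_pos_image, Jt.
Qed.

Lemma inv_quad_primitive_star x y : S x -> S y -> exists z, S z /\
  q z = (g x + g y) / (f x + f y) /\ k (q z) = (k (q x) + k (q y)) / 2.
Proof.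
  destruct HB as [Hf [Hm Hc]]. intros Hx Hy.
  destruct (quot_mean_image S f g x y HS Hf Hc Hx Hy) as [z [Hz Ez]].
  exists z. split; [exact Hz | split; [exact Ez |]].
  fold q in Ez.
  rewrite Ez, (quot_mean S f g x y Hf Hx Hy), (f_inv_sqrt_quad x Hx), (f_inv_sqrt_quad y Hy).
  apply (quad_primitive_mean al be ga J k);
    [exact (image_is_interval S q HS Hc) | exact quad_pos_image | exact inv_quad_primitive_derive
    | exists x | exists y]; auto.
Qed.

Lemma inv_quad_primitive_quot_monotone : strictly_monotone_on S (fun x => k (q x)).
Proof.
  destruct HB as [_ [Hm _]].
  destruct Hm as [Hq|Hq]; [left | right]; intros x y Hx Hy Lxy;
    apply inv_quad_primitive_increasing; first [now exists x | now exists y | auto].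
Qed.

Lemma quad_relation_stmt_i : stmt_i S f g.
Proof.
  destruct HB as [_ [Hm Hc]].
  exists (fun x => k (q x)). split; [| split; [exact inv_quad_primitive_quot_monotone |]].
  - intros x Hx. apply (continuous_comp q k x (Hc x Hx)).
    exact (is_derive_continuous _ _ _ (inv_quad_primitive_derive (q x) (image_of S q x Hx))).
  - apply star_eq_intro; [exact (strictly_monotone_injective S _ Hm)
      | exact (strictly_monotone_injective S _ inv_quad_primitive_quot_monotone)
      | exact inv_quad_primitive_star].
Qed.

Lemma quad_relation_stmt_iii : Bn 1 S f g -> stmt_iii S f g.
Proof.
  intro HB1. destruct HB as [Hf [Hm _]].
  exists (fun x => - k (q x)). split.
  - intros x Hx. pose proof (Hf x Hx).
    pose proof (is_derive_comp k q x _ _ (inv_quad_primitive_derive (q x) (image_of S q x Hx))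
                  (is_derive_quot S f g HB1 x Hx)) as D.
    apply (is_derive_opp (K := R_AbsRing) (V := R_NormedModule)) in D.
    assert (Eq : / quad al be ga (q x) = f x ^ 2).
    { pose proof (quad_quot x Hx). pose proof (quad_pos_image (q x) (image_of S q x Hx)).
      apply (Rmult_eq_reg_r (quad al be ga (q x))); [rewrite Rinv_l | ]; lra. }
    rewrite Eq in D.
    replace (W 1 0 f g x) with (opp (scal (- W 1 0 f g x / f x ^ 2) (f x ^ 2))); [exact D |].
    unfold opp, scal; simpl. unfold mult; simpl. field. lra.
  - apply star_eq_intro; [exact (strictly_monotone_injective S _ Hm) | |].
    + intros x y Hx Hy E.
      apply (strictly_monotone_injective S _ inv_quad_primitive_quot_monotone x y Hx Hy). lra.
    + intros x y Hx Hy. destruct (inv_quad_primitive_star x y Hx Hy) as [z [Hz [Ez Ek]]].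
      exists z. split; [exact Hz | split; [exact Ez | rewrite Ek; field]].
Qed.

End QuadraticRelation.

Lemma stmt_ii_stmt_i S f g :
  is_interval S -> open S -> (exists x0, S x0) -> B0 S f g -> stmt_ii S f g -> stmt_i S f g.
Proof.
  intros HS Ho [x0 Hx0] HB [al [be [ga Hii]]].
  exact (quad_relation_stmt_i S f g al be ga x0 HS Ho Hx0 HB Hii).
Qed.

Lemma stmt_ii_stmt_iii S f g :
  is_interval S -> open S -> (exists x0, S x0) -> B0 S f g -> Bn 1 S f g ->
  stmt_ii S f g -> stmt_iii S f g.
Proof.
  intros HS Ho [x0 Hx0] HB HB1 [al [be [ga Hii]]].
  exact (quad_relation_stmt_iii S f g al be ga x0 HS Ho Hx0 HB Hii HB1).
Qed.

(** * Second-order Wronskian conditions *)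

Definition second_derivatives (S : R -> Prop) (F G F1 G1 F2 G2 : R -> R) : Prop :=
  forall x, S x -> is_derive F x (F1 x) /\ is_derive G x (G1 x) /\
                   is_derive F1 x (F2 x) /\ is_derive G1 x (G2 x).

Lemma Bn2_second_derivatives S f g :
  Bn 2 S f g ->
  second_derivatives S f g (Derive f) (Derive g) (Derive (Derive f)) (Derive (Derive g)).
Proof.
  intros [_ [[Fd _] [[Gd _] _]]] x Hx.
  split; [| split; [| split]]; apply Derive_correct;
    [exact (Fd 0%nat ltac:(lia) x Hx) | exact (Gd 0%nat ltac:(lia) x Hx)
    | exact (Fd 1%nat ltac:(lia) x Hx) | exact (Gd 1%nat ltac:(lia) x Hx)].
Qed.

Lemma quadratic_form_wronskian al be ga F G F1 G1 F2 G2 :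
  al * F ^ 2 + be * F * G + ga * G ^ 2 = 1 ->
  2 * al * F * F1 + be * (F1 * G + F * G1) + 2 * ga * G * G1 = 0 ->
  2 * al * (F1 ^ 2 + F * F2) + be * (F2 * G + 2 * F1 * G1 + F * G2)
    + 2 * ga * (G1 ^ 2 + G * G2) = 0 ->
  F2 * G1 - F1 * G2 = (al * ga - be ^ 2 / 4) * (F1 * G - F * G1) ^ 3.
Proof.
  intros E0 E1 E2.
  (* the defect is a combination of the relation and its first two derivatives *)
  assert (Id : F2 * G1 - F1 * G2 - (al * ga - be ^ 2 / 4) * (F1 * G - F * G1) ^ 3 =
    (1 - (al * F ^ 2 + be * F * G + ga * G ^ 2)) *
       ((F2 * G1 - F1 * G2) + (F1 * G - F * G1) * (al * F1 ^ 2 + be * F1 * G1 + ga * G1 ^ 2))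
    - (F1 * G - F * G1) * (2 * al * (F1 ^ 2 + F * F2) + be * (F2 * G + 2 * F1 * G1 + F * G2)
                           + 2 * ga * (G1 ^ 2 + G * G2)) / 2
    + (2 * al * F * F1 + be * (F1 * G + F * G1) + 2 * ga * G * G1) *
       ((F1 * G - F * G1) * (2 * al * F * F1 + be * (F1 * G + F * G1) + 2 * ga * G * G1) / 4
        - (F * G2 - G * F2) / 2)) by field.
  rewrite E0, E1, E2 in Id. lra.
Qed.

Section SecondOrder.

Variables (S : R -> Prop) (F G F1 G1 F2 G2 : R -> R).
Hypotheses (HS : is_interval S) (Ho : open S) (HD : second_derivatives S F G F1 G1 F2 G2).

Let w (t : R) : R := F1 t * G t - F t * G1 t.

Lemma quadratic_relation_wronskian al be ga :
  (forall x, S x -> al * F x ^ 2 + be * F x * G x + ga * G x ^ 2 = 1) ->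
  forall x, S x -> F2 x * G1 x - F1 x * G2 x = (al * ga - be ^ 2 / 4) * w x ^ 3.
Proof.
  intros E0.
  assert (E1 : forall x, S x ->
            2 * al * F x * F1 x + be * (F1 x * G x + F x * G1 x) + 2 * ga * G x * G1 x = 0).
  { intros x Hx. destruct (HD x Hx) as [DF [DG _]].
    rewrite <- (is_derive_unique _ _ _ (is_derive_locally_const S _ 1 x Ho Hx E0)).
    symmetry. apply is_derive_unique. auto_derive.
    - repeat split; eexists; eassumption.
    - rewrite_derive DF. rewrite_derive DG. ring. }
  intros x Hx. destruct (HD x Hx) as [DF [DG [DF1 DG1]]].
  apply (quadratic_form_wronskian al be ga); auto.
  rewrite <- (is_derive_unique _ _ _ (is_derive_locally_const S _ 0 x Ho Hx E1)).
  symmetry. apply is_derive_unique. auto_derive.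
  - repeat split; eexists; eassumption.
  - rewrite_derive DF. rewrite_derive DG. rewrite_derive DF1. rewrite_derive DG1. ring.
Qed.

Let first_integral (de l m t : R) : R :=
  (l * F1 t + m * G1 t) ^ 2 / w t ^ 2 + de * (l * F t + m * G t) ^ 2.

Lemma first_integral_derive de l m x :
  S x -> w x <> 0 -> F2 x * G1 x - F1 x * G2 x = de * w x ^ 3 ->
  is_derive (first_integral de l m) x 0.
Proof.
  intros Hx Hw Hde. destruct (HD x Hx) as [DF [DG [DF1 DG1]]].
  unfold first_integral, w in *. auto_derive.
  - repeat split; try (eexists; eassumption). intro Z. apply Hw. nra.
  - rewrite_derive DF. rewrite_derive DG. rewrite_derive DF1. rewrite_derive DG1.
    transitivity (-2 * (l * F x + m * G x) * (l * F1 x + m * G1 x)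
                  * ((F2 x * G1 x - F1 x * G2 x) - de * (F1 x * G x - F x * G1 x) ^ 3)
                  / (F1 x * G x - F x * G1 x) ^ 3).
    + field. exact Hw.
    + rewrite Hde. field. exact Hw.
Qed.

Lemma wronskian_relation_quadratic de :
  (forall x, S x -> w x <> 0) -> (exists x0, S x0) ->
  (forall x, S x -> F2 x * G1 x - F1 x * G2 x = de * w x ^ 3) ->
  exists al be ga, forall x, S x -> al * F x ^ 2 + be * F x * G x + ga * G x ^ 2 = 1.
Proof.
  intros Hw [x0 Hx0] Hde.
  assert (Hc : forall l m x, S x -> first_integral de l m x = first_integral de l m x0).
  { intros l m x Hx. apply (interval_derive0_const S); auto.
    intros t Ht. apply first_integral_derive; auto. }
  (* by polarization, [1 = (F1 G - F G1)^2 / w^2] is a combination of three first integrals *)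
  exists (first_integral de 0 1 x0),
    (first_integral de 1 0 x0 + first_integral de 0 1 x0 - first_integral de 1 1 x0),
    (first_integral de 1 0 x0).
  intros x Hx. rewrite <- !(Hc _ _ x Hx). pose proof (Hw x Hx).
  unfold first_integral, w in *. field. assumption.
Qed.

End SecondOrder.

Section WronskianConditions.

Variables (S : R -> Prop) (f g : R -> R).
Hypotheses (HS : is_interval S) (Ho : open S) (HB : Bn 2 S f g).

Let HD := Bn2_second_derivatives S f g HB.
Let Hw x (Hx : S x) : W 1 0 f g x <> 0 := W10_neq0 S f g (Bn2_Bn1 S f g HB) x Hx.

Lemma stmt_ii_stmt_iv : stmt_ii S f g -> stmt_iv S f g.
Proof.
  intros [al [be [ga Hii]]]. exists (al * ga - be ^ 2 / 4). intros x Hx.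
  exact (quadratic_relation_wronskian S f g _ _ _ _ Ho HD al be ga Hii x Hx).
Qed.

Lemma stmt_iv_stmt_ii : (exists x0, S x0) -> stmt_iv S f g -> stmt_ii S f g.
Proof.
  intros Hne [de Hde]. exact (wronskian_relation_quadratic S f g _ _ _ _ HS HD de Hw Hne Hde).
Qed.

Lemma stmt_iv_stmt_v : stmt_iv S f g -> stmt_v S f g.
Proof.
  intros [de Hde] x Hx. destruct (HD x Hx) as [DF [DG [DF1 DG1]]].
  assert (EPsi : forall t, S t -> Psi f g t = - de * (Derive f t * g t - f t * Derive g t) ^ 2).
  { intros t Ht. pose proof (Hw t Ht). unfold Psi. rewrite (Hde t Ht). rewrite W10_eq in *.
    field. assumption. }
  apply (is_derive_ext_loc (fun t => - de * (Derive f t * g t - f t * Derive g t) ^ 2)).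
  - apply (filter_imp S); [| exact (Ho x Hx)]. intros t Ht. symmetry. exact (EPsi t Ht).
  - auto_derive.
    + repeat split; eexists; eassumption.
    + rewrite_derive DF. rewrite_derive DG. rewrite_derive DF1. rewrite_derive DG1.
      pose proof (Hw x Hx). unfold Phi, Psi. rewrite (Hde x Hx), W20_eq. rewrite W10_eq in *.
      field. assumption.
Qed.

Lemma stmt_v_stmt_iv : (exists x0, S x0) -> stmt_v S f g -> stmt_iv S f g.
Proof.
  intros [x0 Hx0] Hv.
  set (psi_ratio := fun t => Psi f g t / (Derive f t * g t - f t * Derive g t) ^ 2).
  assert (Hr : forall x, S x -> is_derive psi_ratio x 0).
  { intros x Hx. destruct (HD x Hx) as [DF [DG [DF1 DG1]]].
    pose proof (Hv x Hx) as DP. pose proof (Hw x Hx) as w0. rewrite W10_eq in w0.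
    unfold psi_ratio. auto_derive.
    - repeat split; try (eexists; eassumption). intro Z. apply w0. nra.
    - rewrite_derive DF. rewrite_derive DG. rewrite_derive DF1. rewrite_derive DG1.
      rewrite_derive DP. unfold Phi. rewrite W20_eq, W10_eq. field. assumption. }
  exists (- psi_ratio x0). intros x Hx.
  rewrite (interval_derive0_const S psi_ratio x0 x HS Hr Hx0 Hx).
  pose proof (Hw x Hx). unfold psi_ratio, Psi. rewrite W21_eq in *. rewrite W10_eq in *.
  field. assumption.
Qed.

End WronskianConditions.

(** * Regularity of solutions of a mean-value equation *)

Lemma is_RInt_window_shift (Z : R -> R) t a : ex_RInt Z (t - a) (t + a) ->
  is_RInt (fun d => Z (t + d)) (- a) a (RInt Z (t - a) (t + a)).
Proof.
  intro Hex. pose proof (RInt_correct _ _ _ Hex) as H.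
  replace (t - a) with (1 * (- a) + t) in H by ring.
  replace (t + a) with (1 * a + t) in H by ring.
  apply (is_RInt_comp_lin (V := R_NormedModule)) in H.
  replace (1 * (- a) + t) with (t - a) in H by ring.
  replace (1 * a + t) with (t + a) in H by ring.
  revert H. apply is_RInt_ext. intros x _. unfold scal; simpl. unfold mult; simpl.
  rewrite Rmult_1_l. f_equal. ring.
Qed.

Lemma is_RInt_window_reflect (Z : R -> R) t a : ex_RInt Z (t - a) (t + a) ->
  is_RInt (fun d => Z (t - d)) (- a) a (RInt Z (t - a) (t + a)).
Proof.
  intro Hex. pose proof (RInt_correct _ _ _ Hex) as H.
  apply (is_RInt_swap (V := R_NormedModule)) in H.
  replace (t + a) with ((-1) * (- a) + t) in H by ring.
  replace (t - a) with ((-1) * a + t) in H by ring.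
  apply (is_RInt_comp_lin (V := R_NormedModule)), (is_RInt_opp (V := R_NormedModule)) in H.
  replace ((-1) * (- a) + t) with (t + a) in H by ring.
  replace ((-1) * a + t) with (t - a) in H by ring.
  unfold opp in H at 2; simpl in H. unfold opp in H; simpl in H. rewrite Ropp_involutive in H.
  revert H. apply is_RInt_ext. intros x _. unfold scal; simpl. unfold mult; simpl.
  replace (-1 * x + t) with (t - x) by ring. ring.
Qed.

Section MeanValueRegularity.

Variables (Z L : R -> R) (s0 rho de : R).
Hypotheses (Hde : 0 < de) (Hrho : 4 * de <= rho)
  (HZc : forall t, Rabs (t - s0) < rho -> continuous Z t)
  (HLc : forall d, Rabs d <= de -> continuous L d)
  (HLpos : forall d, Rabs d <= de -> 0 < L d)
  (Hrel : forall t d, Rabs (t - s0) + Rabs d < rho -> Z (t - d) + Z (t + d) = L d * Z t).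

Let C := RInt L (- de) de.

Lemma RInt_L_pos : 0 < C.
Proof.
  apply RInt_gt_0; [lra | |]; intros x Hx; [apply HLpos | apply HLc]; apply Rabs_le; lra.
Qed.

Lemma window_ex_RInt a b : Rabs (a - s0) < rho -> Rabs (b - s0) < rho -> ex_RInt Z a b.
Proof. apply (interval_ex_RInt _ Z a b (is_interval_ball s0 rho) HZc). Qed.

Lemma window_ends t :
  Rabs (t - s0) < rho / 2 -> Rabs (t - de - s0) < rho /\ Rabs (t + de - s0) < rho.
Proof.
  intro Ht. pose proof (Rabs_shift_le s0 t de) as H1. pose proof (Rabs_shift_le s0 t (- de)) as H2.
  rewrite Rabs_Ropp in H2. rewrite (Rabs_pos_eq de) in H1, H2 by lra.
  replace (t - de - s0) with (t + - de - s0) by ring. split; lra.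
Qed.

Lemma window_mean t : Rabs (t - s0) < rho / 2 -> 2 * RInt Z (t - de) (t + de) = Z t * C.
Proof.
  intro Ht. destruct (window_ends t Ht) as [Hm Hp].
  pose proof (window_ex_RInt _ _ Hm Hp) as Hex.
  assert (HLi : is_RInt L (- de) de C).
  { apply (RInt_correct (V := R_CompleteNormedModule)).
    apply (ex_RInt_continuous (V := R_CompleteNormedModule)). intros z Hz. apply HLc. rewrite Rmin_left, Rmax_right in Hz by lra. apply Rabs_le. lra. }
  pose proof (is_RInt_plus _ _ _ _ _ _
                (is_RInt_window_shift Z t de Hex) (is_RInt_window_reflect Z t de Hex)) as H1.
  assert (H2 : is_RInt (fun d => plus (Z (t + d)) (Z (t - d))) (- de) de (scal (Z t) C)).
  { apply (is_RInt_ext (fun d => scal (Z t) (L d))); [| exact (is_RInt_scal _ _ _ _ _ HLi)].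
    intros d Hd. rewrite Rmin_left, Rmax_right in Hd by lra.
    unfold scal, plus; simpl. unfold mult; simpl. rewrite Rplus_comm, Hrel; [ring |].
    assert (Rabs d < de) by (apply Rabs_def1; lra). lra. }
  pose proof (is_RInt_unique _ _ _ _ H1) as U1. pose proof (is_RInt_unique _ _ _ _ H2) as U2.
  unfold plus, scal in U1, U2; simpl in U1, U2. unfold mult in U2; simpl in U2. lra.
Qed.

Lemma window_primitive y : Rabs (y - s0) < rho -> is_derive (fun v => RInt Z s0 v) y (Z y).
Proof.
  apply (interval_primitive _ Z s0 y (is_interval_ball s0 rho) (open_ball_R s0 rho) HZc).
  rewrite Rminus_diag, Rabs_R0. lra.
Qed.

Lemma window_chasles y : Rabs (y - s0) < rho / 2 ->
  RInt Z (y - de) (y + de) = RInt Z s0 (y + de) - RInt Z s0 (y - de).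
Proof.
  intro Hy. destruct (window_ends y Hy) as [Hm Hp].
  assert (H0 : Rabs (s0 - s0) < rho) by (rewrite Rminus_diag, Rabs_R0; lra).
  rewrite <- (RInt_Chasles Z (y - de) s0 (y + de)), <- (opp_RInt_swap Z s0 (y - de));
    try apply window_ex_RInt; auto.
  unfold plus, opp; simpl. ring.
Qed.

(* Near [t], [Z] is [2 / C] times a difference of primitives of [Z]. *)
Lemma window_derive t :
  Rabs (t - s0) < rho / 2 -> is_derive Z t (2 * (Z (t + de) - Z (t - de)) / C).
Proof.
  intro Ht. pose proof RInt_L_pos.
  assert (EZ : forall y, Rabs (y - s0) < rho / 2 ->
                 2 / C * (RInt Z s0 (y + de) - RInt Z s0 (y - de)) = Z y).
  { intros y Hy. rewrite <- window_chasles by exact Hy.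
    apply (Rmult_eq_reg_r C); [| lra]. rewrite <- window_mean by exact Hy. field. lra. }
  apply (is_derive_ext_loc (fun y => 2 / C * (RInt Z s0 (y + de) - RInt Z s0 (y - de)))).
  - apply (filter_imp (fun y => Rabs (y - s0) < rho / 2));
      [exact EZ | exact (open_ball_R s0 (rho / 2) t Ht)].
  - assert (Dp : is_derive (fun y => y + de) t 1) by (auto_derive; auto).
    assert (Dm : is_derive (fun y => y - de) t 1) by (auto_derive; auto).
    destruct (window_ends t Ht) as [Hm Hp].
    pose proof (is_derive_comp _ _ t _ _ (window_primitive _ Hp) Dp) as D1.
    pose proof (is_derive_comp _ _ t _ _ (window_primitive _ Hm) Dm) as D2.
    apply (is_derive_value _ _ _ _
             (is_derive_scal _ _ (2 / C) _ (is_derive_minus _ _ _ _ _ D1 D2))).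
    unfold minus, plus, opp, scal; simpl. unfold mult; simpl. field. lra.
Qed.

Lemma mean_value_second_derivative t : Rabs (t - s0) < rho / 4 ->
  is_derive Z t (Derive Z t) /\ is_derive (Derive Z) t (4 * (L (2 * de) - 2) / C ^ 2 * Z t).
Proof.
  intro Ht. pose proof RInt_L_pos.
  assert (Ht2 : Rabs (t - s0) < rho / 2) by lra.
  split; [rewrite (is_derive_unique _ _ _ (window_derive t Ht2)); exact (window_derive t Ht2) |].
  apply (is_derive_ext_loc (fun y => 2 * (Z (y + de) - Z (y - de)) / C)).
  - apply (filter_imp (fun y => Rabs (y - s0) < rho / 2));
      [| exact (open_ball_R s0 (rho / 2) t Ht2)].
    intros y Hy. symmetry. exact (is_derive_unique _ _ _ (window_derive y Hy)).
  - assert (Hp : Rabs (t + de - s0) < rho / 2)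
      by (pose proof (Rabs_shift_le s0 t de); rewrite (Rabs_pos_eq de) in *; lra).
    assert (Hm : Rabs (t + - de - s0) < rho / 2)
      by (pose proof (Rabs_shift_le s0 t (- de)); rewrite Rabs_Ropp, (Rabs_pos_eq de) in *; lra).
    pose proof (window_derive _ Hp) as D1. pose proof (window_derive _ Hm) as D2.
    assert (Hr : Z (t - 2 * de) + Z (t + 2 * de) = L (2 * de) * Z t)
      by (apply Hrel; rewrite (Rabs_pos_eq (2 * de)); lra).
    auto_derive.
    + repeat split; eexists; eassumption.
    + rewrite_derive D1. rewrite_derive D2.
      replace (t + - de + de) with t by ring. replace (t + de - de) with t by ring.
      replace (t + de + de) with (t + 2 * de) by ring.
      replace (t + - de - de) with (t - 2 * de) by ring.
      replace (Z (t + 2 * de)) with (L (2 * de) * Z t - Z (t - 2 * de)) by lra.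
      field. lra.
Qed.

End MeanValueRegularity.

(** * The mean equation implies the quadratic relation *)

Section MidpointEquation.

Variables (K : R -> Prop) (F G U : R -> R).
Hypotheses (HK : is_interval K) (Ho : open K) (HF : forall s, K s -> 0 < F s)
  (HG : forall s, K s -> G s = U s * F s) (HU : continuous_on_set K U) (Hi : injective_on K U)
  (Hrel : forall c d, K (c - d) -> K (c + d) ->
            F c * (G (c - d) + G (c + d)) = G c * (F (c - d) + F (c + d))).

Lemma midpoint_det s t : K s -> K t -> s <> t -> F s * G t - G s * F t <> 0.
Proof.
  intros Ks Kt N. rewrite (HG s Ks), (HG t Kt).
  replace (F s * (U t * F t) - U s * F s * F t) with (F s * F t * (U t - U s)) by ring.
  pose proof (HF s Ks). pose proof (HF t Kt).
  repeat apply Rmult_integral_contrapositive_currified; try lra.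
  intro Z. apply N. apply Hi; auto. lra.
Qed.

Lemma midpoint_F_continuous s : K s -> continuous F s.
Proof.
  intro Ks. destruct (open_other_point K s Ho Ks) as [t0 [Kt0 Nt0]].
  set (m t := (t + t0) / 2).
  assert (Km : forall t, K t -> K (m t)).
  { intros t Kt. apply (is_interval_between K t t0); auto. unfold m, Rmin, Rmax.
    destruct (Rle_dec t t0); lra. }
  assert (NU : forall t, K t -> t <> t0 -> U t - U (m t) <> 0).
  { intros t Kt Nt Z. apply Nt. assert (t = m t) by (apply Hi; auto; lra). unfold m in *. lra. }
  (* the relation at the midpoint of [t] and [t0] expresses [F t] through [U] and [F t0] *)
  assert (Hexp : forall t, K t -> t <> t0 -> F t = F t0 * (U (m t) - U t0) / (U t - U (m t))).
  { intros t Kt Nt. pose proof (Hrel (m t) ((t - t0) / 2)) as R.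
    replace (m t - (t - t0) / 2) with t0 in R by (unfold m; field).
    replace (m t + (t - t0) / 2) with t in R by (unfold m; field).
    specialize (R Kt0 Kt). rewrite !HG in R by auto.
    pose proof (HF _ (Km t Kt)). pose proof (NU t Kt Nt).
    apply (Rmult_eq_reg_l (F (m t) * (U t - U (m t))));
      [| apply Rmult_integral_contrapositive_currified; lra].
    field_simplify; [nra | assumption]. }
  apply (continuous_ext_loc _ (fun t => F t0 * (U (m t) - U t0) / (U t - U (m t)))).
  - destruct (open_Rabs K s Ho Ks) as [e [He Hb]].
    exists (mkposreal _ (Rmin_glb_lt _ _ _ He (Rabs_pos_lt _ (Rminus_eq_contra _ _ Nt0)))).
    intros y Hy. change (Rabs (y - s) < Rmin e (Rabs (t0 - s))) in Hy.
    symmetry. apply Hexp; [apply Hb; eapply Rlt_le_trans; [exact Hy | apply Rmin_l] |].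
    intros ->. pose proof (Rmin_r e (Rabs (t0 - s))). lra.
  - assert (Cm : continuous (fun t => U (m t)) s).
    { apply (continuous_comp m U); [| exact (HU _ (Km s Ks))].
      apply (is_derive_continuous _ _ (/ 2)). unfold m. auto_derive; [auto | field]. }
    apply continuous_mult_R; [apply continuous_mult_R; [apply continuous_const |] |].
    + apply continuous_minus_R; [exact Cm | apply continuous_const].
    + apply continuous_Rinv_comp; [apply continuous_minus_R; [exact (HU s Ks) | exact Cm] |].
      exact (NU s Ks (not_eq_sym Nt0)).
Qed.

Lemma midpoint_G_continuous s : K s -> continuous G s.
Proof.
  intro Ks. apply (continuous_ext_loc _ (fun t => U t * F t)).
  - apply (filter_imp K); [intros t Kt; symmetry; exact (HG t Kt) | exact (Ho s Ks)].
  - exact (continuous_mult_R _ _ s (HU s Ks) (midpoint_F_continuous s Ks)).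
Qed.

Lemma midpoint_pair a b : K a -> K b ->
  F ((a + b) / 2) * (G a + G b) = G ((a + b) / 2) * (F a + F b).
Proof.
  intros Ka Kb. pose proof (Hrel ((a + b) / 2) ((b - a) / 2)) as R.
  replace ((a + b) / 2 - (b - a) / 2) with a in R by field.
  replace ((a + b) / 2 + (b - a) / 2) with b in R by field.
  exact (R Ka Kb).
Qed.

Let ratio (t d : R) : R := (F (t - d) + F (t + d)) / F t.

Lemma midpoint_sum_F t d : K (t - d) -> K (t + d) -> F (t - d) + F (t + d) = ratio t d * F t.
Proof.
  intros K1 K2. pose proof (HF t (is_interval_center K t d HK K1 K2)). unfold ratio. field. lra.
Qed.

Lemma midpoint_sum_G t d : K (t - d) -> K (t + d) -> G (t - d) + G (t + d) = ratio t d * G t.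
Proof.
  intros K1 K2. pose proof (HF t (is_interval_center K t d HK K1 K2)).
  apply (Rmult_eq_reg_l (F t)); [| lra].
  rewrite (Hrel t d K1 K2), (midpoint_sum_F t d K1 K2). ring.
Qed.

Lemma midpoint_ratio_indep s t d :
  K (s - d) -> K (s + d) -> K (t - d) -> K (t + d) -> ratio s d = ratio t d.
Proof.
  intros K1 K2 K3 K4.
  pose proof (is_interval_center K s d HK K1 K2) as Ks.
  pose proof (is_interval_center K t d HK K3 K4) as Kt.
  destruct (Req_dec s t) as [<-|Nst]; [reflexivity |].
  set (c := (s + t) / 2).
  assert (Kc : K c)
    by (apply (is_interval_between K s t); auto; unfold c, Rmin, Rmax; destruct (Rle_dec s t); lra).
  pose proof (midpoint_pair _ _ K1 K4) as E1. pose proof (midpoint_pair _ _ K2 K3) as E2.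
  pose proof (midpoint_pair _ _ Ks Kt) as E3.
  replace ((s - d + (t + d)) / 2) with c in E1 by (unfold c; field).
  replace ((s + d + (t - d)) / 2) with c in E2 by (unfold c; field).
  fold c in E3.
  (* adding the relations on [(s - d, t + d)] and [(s + d, t - d)] isolates the two ratios *)
  assert (E : F c * (ratio s d * G s + ratio t d * G t)
              = G c * (ratio s d * F s + ratio t d * F t)).
  { rewrite <- (midpoint_sum_F s d), <- (midpoint_sum_F t d),
      <- (midpoint_sum_G s d), <- (midpoint_sum_G t d) by assumption. lra. }
  assert (Z : (ratio s d - ratio t d) * (F c * G s - G c * F s) = 0).
  { transitivity ((F c * (ratio s d * G s + ratio t d * G t)
                   - G c * (ratio s d * F s + ratio t d * F t))
                  - ratio t d * (F c * (G s + G t) - G c * (F s + F t))); [ring |].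
    rewrite E, E3. ring. }
  apply Rmult_integral in Z. destruct Z as [Z|Z]; [lra |].
  exfalso. apply (midpoint_det c s Kc Ks); [unfold c; lra | exact Z].
Qed.

Lemma midpoint_ratio_continuous s0 d : K (s0 - d) -> K (s0 + d) -> continuous (ratio s0) d.
Proof.
  intros K1 K2. unfold ratio.
  apply continuous_mult_R; [apply continuous_plus_R | apply continuous_const].
  - apply (continuous_comp (fun d => s0 - d) F); [| exact (midpoint_F_continuous _ K1)].
    apply (is_derive_continuous _ _ (-1)). auto_derive; auto.
  - apply (continuous_comp (fun d => s0 + d) F); [| exact (midpoint_F_continuous _ K2)].
    apply (is_derive_continuous _ _ 1). auto_derive; auto.
Qed.

Lemma midpoint_ball_relation s0 rho t d :
  (forall y, Rabs (y - s0) < rho -> K y) -> Rabs (t - s0) + Rabs d < rho ->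
  F (t - d) + F (t + d) = ratio s0 d * F t /\ G (t - d) + G (t + d) = ratio s0 d * G t.
Proof.
  intros Hb Htd. pose proof (Rabs_pos (t - s0)). pose proof (Rabs_pos d).
  assert (K1 : K (t - d)).
  { apply Hb. replace (t - d - s0) with (t + - d - s0) by ring.
    pose proof (Rabs_shift_le s0 t (- d)). rewrite Rabs_Ropp in *. lra. }
  assert (K2 : K (t + d)) by (apply Hb; pose proof (Rabs_shift_le s0 t d); lra).
  destruct (Rabs_center_pm s0 d) as [E3 E4].
  assert (K3 : K (s0 - d)) by (apply Hb; rewrite E3; lra).
  assert (K4 : K (s0 + d)) by (apply Hb; rewrite E4; lra).
  rewrite (midpoint_ratio_indep s0 t d K3 K4 K1 K2).
  split; [apply midpoint_sum_F | apply midpoint_sum_G]; assumption.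
Qed.

Lemma midpoint_local_ode s0 : K s0 -> exists r mu, 0 < r /\ forall t, Rabs (t - s0) < r ->
  K t /\ is_derive F t (Derive F t) /\ is_derive (Derive F) t (mu * F t) /\
  is_derive G t (Derive G t) /\ is_derive (Derive G) t (mu * G t).
Proof.
  intro Ks0. destruct (open_Rabs K s0 Ho Ks0) as [rho [Hrho Hb]].
  assert (HLc : forall d, Rabs d < rho -> continuous (ratio s0) d).
  { intros d Hd. destruct (Rabs_center_pm s0 d) as [E1 E2].
    apply midpoint_ratio_continuous; apply Hb; [rewrite E1 | rewrite E2]; exact Hd. }
  assert (HL0 : ratio s0 0 = 2)
    by (unfold ratio; rewrite Rminus_0_r, Rplus_0_r; pose proof (HF s0 Ks0); field; lra).
  destruct (continuous_pos_near (ratio s0) 0 (HLc 0 ltac:(rewrite Rabs_R0; lra)) ltac:(lra))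
    as [eps [Heps HLpos]].
  set (de := Rmin (eps / 2) (rho / 4)).
  assert (Hde : 0 < de /\ de <= eps / 2 /\ de <= rho / 4)
    by (unfold de; split; [apply Rmin_glb_lt; lra | split; [apply Rmin_l | apply Rmin_r]]).
  assert (HLc' : forall d, Rabs d <= de -> continuous (ratio s0) d)
    by (intros d Hd; apply HLc; lra).
  assert (HLpos' : forall d, Rabs d <= de -> 0 < ratio s0 d)
    by (intros d Hd; apply HLpos; rewrite Rminus_0_r; lra).
  assert (Hr : 4 * de <= rho) by lra.
  exists (rho / 4), (4 * (ratio s0 (2 * de) - 2) / RInt (ratio s0) (- de) de ^ 2).
  split; [lra |]. intros t Ht.
  destruct (mean_value_second_derivative F (ratio s0) s0 rho de (proj1 Hde) Hr
              (fun t Ht => midpoint_F_continuous t (Hb t Ht)) HLc' HLpos'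
              (fun t d H => proj1 (midpoint_ball_relation s0 rho t d Hb H)) t Ht) as [DF DF1].
  destruct (mean_value_second_derivative G (ratio s0) s0 rho de (proj1 Hde) Hr
              (fun t Ht => midpoint_G_continuous t (Hb t Ht)) HLc' HLpos'
              (fun t d H => proj2 (midpoint_ball_relation s0 rho t d Hb H)) t Ht) as [DG DG1].
  split; [apply Hb; lra | auto].
Qed.

Variables (t1 : R).
Hypothesis (Kt1 : K t1).

Let mu : R := Derive (Derive F) t1 / F t1.
Let w (t : R) : R := Derive F t * G t - F t * Derive G t.

Lemma midpoint_ode :
  second_derivatives K F G (Derive F) (Derive G) (fun t => mu * F t) (fun t => mu * G t).
Proof.
  set (Mu t := Derive (Derive F) t / F t).
  assert (Hmu : forall t m, K t -> is_derive (Derive F) t (m * F t) -> Mu t = m).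
  { intros t m Kt D. unfold Mu. rewrite (is_derive_unique _ _ _ D).
    pose proof (HF t Kt). field. lra. }
  assert (ZMu : forall t, K t -> is_derive Mu t 0).
  { intros t Kt. destruct (midpoint_local_ode t Kt) as [r [m [Hr Hl]]].
    apply (is_derive_locally_const _ Mu m t (open_ball_R t r));
      [rewrite Rminus_diag, Rabs_R0; exact Hr |].
    intros y Hy. destruct (Hl y Hy) as [Ky [_ [D _]]]. exact (Hmu y m Ky D). }
  intros t Kt. destruct (midpoint_local_ode t Kt) as [r [m [Hr Hl]]].
  destruct (Hl t ltac:(rewrite Rminus_diag, Rabs_R0; exact Hr)) as [_ [DF [DF1 [DG DG1]]]].
  assert (E : m = mu).
  { rewrite <- (Hmu t m Kt DF1). exact (interval_derive0_const K Mu t t1 HK ZMu Kt Kt1). }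
  rewrite E in DF1, DG1.
  split; [exact DF | split; [exact DG | split; [exact DF1 | exact DG1]]].
Qed.

Lemma midpoint_wronskian_const t : K t -> w t = w t1.
Proof.
  intro Kt. apply (interval_derive0_const K w t t1 HK); auto.
  intros y Ky. destruct (midpoint_ode y Ky) as [DF [DG [DF1 DG1]]].
  unfold w. auto_derive.
  - repeat split; eexists; eassumption.
  - rewrite_derive DF. rewrite_derive DG. rewrite_derive DF1. rewrite_derive DG1. ring.
Qed.

Lemma midpoint_wronskian_neq0 : w t1 <> 0.
Proof.
  intro Z. destruct (open_other_point K t1 Ho Kt1) as [t2 [Kt2 N2]].
  assert (ZQ : forall t, K t -> is_derive (fun s => G s / F s) t 0).
  { intros t Kt. destruct (midpoint_ode t Kt) as [DF [DG _]]. pose proof (HF t Kt).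
    pose proof (midpoint_wronskian_const t Kt) as Wt. rewrite Z in Wt. unfold w in Wt.
    apply (is_derive_value _ _ _ _ (is_derive_div _ _ _ _ _ DG DF ltac:(lra))).
    replace (Derive G t * F t - G t * Derive F t)
      with (- (Derive F t * G t - F t * Derive G t)) by ring.
    rewrite Wt. unfold Rdiv. rewrite Ropp_0, Rmult_0_l. reflexivity. }
  pose proof (interval_derive0_const K _ t2 t1 HK ZQ Kt2 Kt1) as E. cbv beta in E.
  pose proof (HF t2 Kt2). pose proof (HF t1 Kt1).
  rewrite (HG t2 Kt2), (HG t1 Kt1) in E.
  apply N2, Hi; auto.
  replace (U t2) with (U t2 * F t2 / F t2) by (field; lra). rewrite E. field. lra.
Qed.

Lemma midpoint_quadratic :
  exists al be ga, forall s, K s -> al * F s ^ 2 + be * F s * G s + ga * G s ^ 2 = 1.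
Proof.
  apply (wronskian_relation_quadratic K F G (Derive F) (Derive G)
           (fun t => mu * F t) (fun t => mu * G t) HK midpoint_ode (- mu / w t1 ^ 2)).
  - intros t Kt. change (w t <> 0). rewrite (midpoint_wronskian_const t Kt).
    exact midpoint_wronskian_neq0.
  - exists t1. exact Kt1.
  - intros t Kt.
    change (mu * F t * Derive G t - Derive F t * (mu * G t) = - mu / w t1 ^ 2 * w t ^ 3).
    pose proof midpoint_wronskian_neq0.
    transitivity (- mu * w t); [unfold w; ring |].
    rewrite (midpoint_wronskian_const t Kt). field. assumption.
Qed.

End MidpointEquation.

Lemma star_midpoint_relation S f g h c d :
  is_interval S -> B0 S f g -> star_eq S f g h ->
  image S h (c - d) -> image S h (c + d) -> image S h c ->
  f (inv_on S h c) * (g (inv_on S h (c - d)) + g (inv_on S h (c + d))) =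
  g (inv_on S h c) * (f (inv_on S h (c - d)) + f (inv_on S h (c + d))).
Proof.
  intros HS [Hf [_ Hc]] Hst K1 K2 Kc.
  destruct (inv_on_correct S h _ K1) as [Sx Ex]. destruct (inv_on_correct S h _ K2) as [Sy Ey].
  destruct (inv_on_correct S h _ Kc) as [Sz _].
  set (x := inv_on S h (c - d)) in *. set (y := inv_on S h (c + d)) in *.
  set (z := inv_on S h c) in *.
  pose proof (Hst x y Sx Sy) as St.
  replace ((h x + h y) / 2) with c in St by (rewrite Ex, Ey; field).
  destruct (inv_on_correct S _ _ (quot_mean_image S f g x y HS Hf Hc Sx Sy)) as [_ Eq].
  rewrite St in Eq. fold z in Eq. unfold quot in Eq.
  pose proof (Hf x Sx). pose proof (Hf y Sy). pose proof (Hf z Sz).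
  apply (Rmult_eq_reg_r (/ (f z * (f x + f y)))); [| apply Rinv_neq_0_compat; nra].
  transitivity ((g x + g y) / (f x + f y)); [field; lra | rewrite <- Eq; field; lra].
Qed.

Lemma stmt_i_stmt_ii S f g :
  is_interval S -> open S -> (exists x0, S x0) -> B0 S f g -> stmt_i S f g -> stmt_ii S f g.
Proof.
  intros HS Ho [x0 Hx0] HB [h [Hhc [Hhm Hst]]]. pose proof HB as [Hf [Hqm Hqc]].
  set (K := image S h). set (hi := inv_on S h).
  assert (HK : is_interval K) by exact (image_is_interval S h HS Hhc).
  assert (Hhi : forall s, K s -> S (hi s))
    by (intros s Ks; exact (proj1 (inv_on_correct S h s Ks))).
  destruct (midpoint_quadratic K (fun s => f (hi s)) (fun s => g (hi s)) (fun s => quot f g (hi s))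
              HK (image_open S h HS Hhc Hhm Ho)) with (t1 := h x0) as [al [be [ga Hq]]].
  - intros s Ks. exact (Hf _ (Hhi s Ks)).
  - intros s Ks. pose proof (Hf _ (Hhi s Ks)). unfold quot. field. lra.
  - intros s Ks.
    exact (continuous_comp hi (quot f g) s (inv_on_continuous S h HS Hhc Hhm s Ho Ks)
             (Hqc _ (Hhi s Ks))).
  - intros s t Ks Kt E. destruct (inv_on_correct S h s Ks) as [_ <-].
    destruct (inv_on_correct S h t Kt) as [_ <-].
    f_equal. exact (strictly_monotone_injective S _ Hqm _ _ (Hhi s Ks) (Hhi t Kt) E).
  - intros c d K1 K2.
    exact (star_midpoint_relation S f g h c d HS HB Hst K1 K2 (is_interval_center K c d HK K1 K2)).
  - exists x0. auto.
  - exists al, be, ga. intros x Hx. specialize (Hq (h x) (image_of S h x Hx)).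
    unfold hi in Hq.
    rewrite (inv_on_cancel S h x (strictly_monotone_injective S h Hhm) Hx) in Hq. exact Hq.
Qed.

Theorem theorem3p3 (a b : Rbar) (f g : R -> R) :
  Rbar_lt a b ->
  B0 (oint a b) f g ->
  (stmt_i (oint a b) f g <-> stmt_ii (oint a b) f g) /\
  (Bn 1 (oint a b) f g ->
     (stmt_i (oint a b) f g <-> stmt_ii (oint a b) f g) /\
     (stmt_i (oint a b) f g <-> stmt_iii (oint a b) f g)) /\
  (Bn 2 (oint a b) f g ->
     (stmt_i (oint a b) f g <-> stmt_ii (oint a b) f g) /\
     (stmt_i (oint a b) f g <-> stmt_iii (oint a b) f g) /\
     (stmt_i (oint a b) f g <-> stmt_iv (oint a b) f g) /\
     (stmt_i (oint a b) f g <-> stmt_v (oint a b) f g)).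
Proof.
  intros Hab HB.
  pose proof (is_interval_oint a b) as HS. pose proof (open_oint a b) as Ho.
  pose proof (oint_inhabited a b Hab) as Hne.
  assert (E12 : stmt_i (oint a b) f g <-> stmt_ii (oint a b) f g)
    by (split; [apply stmt_i_stmt_ii | apply stmt_ii_stmt_i]; assumption).
  assert (E13 : Bn 1 (oint a b) f g -> (stmt_i (oint a b) f g <-> stmt_iii (oint a b) f g)).
  { intro HB1. split; [intro Hi; apply stmt_ii_stmt_iii, E12 | apply stmt_iii_stmt_i]; assumption. }
  assert (E24 : Bn 2 (oint a b) f g -> (stmt_ii (oint a b) f g <-> stmt_iv (oint a b) f g))
    by (intro HB2; split; [apply stmt_ii_stmt_iv | apply stmt_iv_stmt_ii]; assumption).
  assert (E45 : Bn 2 (oint a b) f g -> (stmt_iv (oint a b) f g <-> stmt_v (oint a b) f g))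
    by (intro HB2; split; [apply stmt_iv_stmt_v | apply stmt_v_stmt_iv]; assumption).
  split; [exact E12 | split; intro HBn; [split; [exact E12 | exact (E13 HBn)] |]].
  pose proof (Bn2_Bn1 _ _ _ HBn) as HB1.
  split; [exact E12 | split; [exact (E13 HB1) | split]].
  - rewrite E12. exact (E24 HBn).
  - rewrite E12, (E24 HBn). exact (E45 HBn).
Qed.
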